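(* Among all $3\times3$ unimodular zerofree matrices $M$, the minimum of $\|(M\;M^{-1})\|$ is $3$. There are exactly $576$ minimizers, and all of them are equivalent to $$M=\begin{pmatrix}1&2&2\\2&1&2\\2&2&3\end{pmatrix},\qquad M^{-1}=\begin{pmatrix}1&2&-2\\2&1&-2\\-2&-2&3\end{pmatrix}.$$
   Context: A square integer matrix is unimodular if its determinant is $\pm1$. An invertible matrix $Z$ is zerofree if none of the entries of $Z$ and none of the entries of $Z^{-1}$ is zero. For a matrix $A$, $\|A\|$ denotes the maximum of the absolute values of its entries. $(M\;M^{-1})$ denotes the $n\times 2n$ matrix obtained by concatenating $M$ and $M^{-1}$ side by side. Two $n\times n$ matrices $Z,Z'$ are equivalent if $Z'=PZQ$ for some $n\times n$ signed permutation matrices $P,Q$ (permutation matrices whose nonzero entries may be $\pm1$). *)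

From mathcomp Require Import all_boot all_order all_algebra all_fingroup.
Set Implicit Arguments. Unset Strict Implicit. Unset Printing Implicit Defensive.
Import Order.TTheory GRing.Theory Num.Theory.
Local Open Scope ring_scope.

Definition unimodular (n : nat) (M : 'M[int]_n) : Prop :=
  \det M = 1 \/ \det M = -1.

Definition zerofree (n : nat) (M : 'M[int]_n) : Prop :=
  M \in unitmx /\
  (forall i j, M i j != 0) /\ (forall i j, invmx M i j != 0).

Definition mxnorm (m n : nat) (A : 'M[int]_(m, n)) : nat :=
  \max_(i < m) \max_(j < n) `|A i j|%N.

Definition pairnorm (n : nat) (M : 'M[int]_n) : nat :=
  mxnorm (row_mx M (invmx M)).

Definition signed_perm_mx (n : nat) (P : 'M[int]_n) : Prop :=
  exists (s : 'S_n) (d : 'I_n -> int),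
    (forall i, d i = 1 \/ d i = -1) /\
    P = \matrix_(i, j) (d i * (s i == j)%:R).

Definition mx_equiv (n : nat) (Z Z' : 'M[int]_n) : Prop :=
  exists P Q : 'M[int]_n,
    signed_perm_mx P /\ signed_perm_mx Q /\ Z' = P *m Z *m Q.

Definition M0 : 'M[int]_3 :=
  \matrix_(i < 3, j < 3)
    (if (i : nat) == 2%N then (if (j : nat) == 2%N then 3 else 2)
     else if (i : nat) == j then 1 else 2).

From mathcomp Require Import all_boot all_order all_algebra all_fingroup.
From mathcomp Require Import ring.
Set Implicit Arguments. Unset Strict Implicit. Unset Printing Implicit Defensive.
Import Order.TTheory GRing.Theory Num.Theory.
Local Open Scope ring_scope.

(* For unimodular M, M^-1 = (det M) adj M, so ||(M M^-1)|| <= 3 together with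
   zerofreeness says that the entries of M and its 2x2 minors are all nonzero
   of absolute value at most 3. These matrices form a finite set, which is
   enumerated by computation: it has 576 elements, none of them satisfies the
   same condition with the bound 2, and a fixed sequence of row and column
   swaps and sign changes brings each of them to M0. *)

Section SignedPermutations.

Variable n : nat.
Implicit Types (s : 'S_n) (d : 'I_n -> int) (P Q Z : 'M[int]_n).

Definition signed_perm s d : 'M[int]_n := \matrix_(i, j) (d i * (s i == j)%:R).

Lemma mul_signed_permE s d (M : 'M[int]_n) i j :
  (signed_perm s d *m M) i j = d i * M (s i) j.
Proof.
rewrite mxE (bigD1 (s i)) //= big1 => [|k /negbTE nk]; last first.
  by rewrite mxE eq_sym nk mulr0 mul0r.
by rewrite mxE eqxx mulr1 addr0.
Qed.

Lemma signed_perm_mx1 : signed_perm_mx (1%:M : 'M[int]_n).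
Proof.
exists 1%g, (fun=> 1); split; first by auto.
by apply/matrixP => i j; rewrite !mxE perm1 mul1r.
Qed.

Lemma signed_perm_mxM P Q :
  signed_perm_mx P -> signed_perm_mx Q -> signed_perm_mx (P *m Q).
Proof.
case=> s [d [sd ->]] [t [e [se ->]]].
exists (s * t)%g, (fun i => d i * e (s i)); split.
  move=> i; case: (sd i) => ->; case: (se (s i)) => ->;
  by rewrite ?mulr1 ?mulrN1 ?opprK; auto.
by apply/matrixP => i j; rewrite -/(signed_perm s d) mul_signed_permE !mxE permM; ring.
Qed.

Lemma signed_perm_mx_tr P : signed_perm_mx P -> signed_perm_mx P^T.
Proof.
case=> s [d [sd ->]]; exists s^-1%g, (fun i => d (s^-1%g i)); split => //.
apply/matrixP => i j; rewrite !mxE.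
have [<-|ne] := eqVneq (s^-1%g i) j; first by rewrite permKV eqxx.
case: eqP => [E|]; last by rewrite !mulr0.
by case/eqP: ne; rewrite -E permK.
Qed.

Lemma mx_equiv_refl Z : mx_equiv Z Z.
Proof.
exists 1%:M, 1%:M; split; [exact: signed_perm_mx1|split; [exact: signed_perm_mx1|]].
by rewrite mul1mx mulmx1.
Qed.

Lemma mx_equiv_mul Z Z' P Q : mx_equiv Z Z' ->
  signed_perm_mx P -> signed_perm_mx Q -> mx_equiv Z (P *m Z' *m Q).
Proof.
case=> P0 [Q0 [sP0 [sQ0 ->]]] sP sQ.
exists (P *m P0), (Q0 *m Q); split; [exact: signed_perm_mxM|split; [exact: signed_perm_mxM|]].
by rewrite !mulmxA.
Qed.

End SignedPermutations.

Lemma pairnorm_leP n (P : 'M[int]_n) k : (pairnorm P <= k)%N <->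
  (forall i j, (`|P i j| <= k)%N) /\ (forall i j, (`|invmx P i j| <= k)%N).
Proof.
rewrite /pairnorm /mxnorm; split.
  move/bigmax_leqP => le_k; split => i j; have/bigmax_leqP := le_k i isT.
    by move/(_ (lshift n j) isT); rewrite row_mxEl.
  by move/(_ (rshift n j) isT); rewrite row_mxEr.
case=> le_P le_invP; apply/bigmax_leqP => i _; apply/bigmax_leqP => j _.
by case: (split_ordP j) => j' ->; rewrite ?row_mxEl ?row_mxEr.
Qed.

(* 3x3 integer matrices as triples of rows: unlike 'M[int]_3, whose
   definition is locked, they can be evaluated by vm_compute. *)
Definition vec3 := (int * int * int)%type.
Definition mat3 := (vec3 * vec3 * vec3)%type.

Definition vec_entry (v : vec3) (j : nat) : int :=
  let '(a, b, c) := v in if j == 0%N then a else if j == 1%N then b else c.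

Definition mat_entry (x : mat3) (i j : nat) : int :=
  let '(u, v, w) := x in
  vec_entry (if i == 0%N then u else if i == 1%N then v else w) j.

Definition mx_of (x : mat3) : 'M[int]_3 := \matrix_(i, j) mat_entry x i j.

Definition mat_of (M : 'M[int]_3) : mat3 :=
  let e i j := M (inord i) (inord j) in
  ((e 0 0, e 0 1, e 0 2), (e 1 0, e 1 1, e 1 2), (e 2 0, e 2 1, e 2 2))%N.

Definition entries (x : mat3) : seq int :=
  let '((a, b, c), (d, e, f), (g, h, i)) := x in [:: a; b; c; d; e; f; g; h; i].

Definition tr3 (x : mat3) : mat3 :=
  let '((a, b, c), (d, e, f), (g, h, i)) := x in ((a, d, g), (b, e, h), (c, f, i)).

Definition cross (u v : vec3) : vec3 :=
  let '(a, b, c) := u in let '(d, e, f) := v in (b * f - c * e, c * d - a * f, a * e - b * d).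

Definition dot (u v : vec3) : int :=
  let '(a, b, c) := u in let '(d, e, f) := v in a * d + b * e + c * f.

Definition det3 (x : mat3) : int := let '(u, v, w) := x in dot u (cross v w).

Definition adj3 (x : mat3) : mat3 :=
  let '(u, v, w) := x in tr3 (cross v w, cross w u, cross u v).

Lemma mx_ofK : cancel mx_of mat_of.
Proof. by case=> [[[[a b] c] [[d e] f]] [[g h] i]]; rewrite /mat_of !mxE !inordK. Qed.

Lemma mat_ofK : cancel mat_of mx_of.
Proof.
move=> M; apply/matrixP => p q; rewrite mxE.
by case: p => [[|[|[|//]]] ?]; case: q => [[|[|[|//]]] ?];
  congr (M _ _); apply: val_inj; rewrite /= inordK.
Qed.

Lemma tr3K : involutive tr3.
Proof. by case=> [[[[a b] c] [[d e] f]] [[g h] i]]. Qed.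

Lemma mx_of_tr3 x : mx_of (tr3 x) = (mx_of x)^T.
Proof.
case: x => [[[[a b] c] [[d e] f]] [[g h] i]]; apply/matrixP => p q; rewrite !mxE.
by case: p => [[|[|[|//]]] ?]; case: q => [[|[|[|//]]] ?].
Qed.

Lemma det_mx_of x : \det (mx_of x) = det3 x.
Proof.
case: x => [[[[a b] c] [[d e] f]] [[g h] i]].
rewrite (expand_det_row _ 0) !big_ord_recr big_ord0 /= /cofactor.
rewrite !(expand_det_row _ 0) !big_ord_recr !big_ord0 /= /cofactor.
by rewrite !det_mx11 !mxE /=; ring.
Qed.

Lemma mul_mx_of_adj3 x : mx_of x *m mx_of (adj3 x) = (det3 x)%:M.
Proof.
case: x => [[[[a b] c] [[d e] f]] [[g h] i]].
apply/matrixP => p q; rewrite !mxE !big_ord_recr big_ord0 /= !mxE /=.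
by case: p => [[|[|[|//]]] ?]; case: q => [[|[|[|//]]] ?]; rewrite /=; ring.
Qed.

Lemma all_entriesP (P : pred int) x :
  reflect (forall i j, P (mx_of x i j)) (all P (entries x)).
Proof.
case: x => [[[[a b] c] [[d e] f]] [[g h] i]]; apply: (iffP idP).
  move=> /allP Pe [[|[|[|//]]] ?] [[|[|[|//]]] ?]; rewrite mxE /=; apply: Pe;
  by rewrite !inE eqxx ?orbT.
move=> PM; have P_at p q (lt_p : (p < 3)%N) (lt_q : (q < 3)%N) :=
  PM (Ordinal lt_p) (Ordinal lt_q).
move: (P_at 0 0 isT isT)%N (P_at 0 1 isT isT)%N (P_at 0 2 isT isT)%N
  (P_at 1 0 isT isT)%N (P_at 1 1 isT isT)%N (P_at 1 2 isT isT)%N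
  (P_at 2 0 isT isT)%N (P_at 2 1 isT isT)%N (P_at 2 2 isT isT)%N.
by rewrite !mxE /= => -> -> -> -> -> -> -> -> ->.
Qed.

Definition unimodularb (x : mat3) : bool := (det3 x == 1) || (det3 x == -1).

Lemma unimodularbP x : reflect (unimodular (mx_of x)) (unimodularb x).
Proof. by rewrite /unimodular det_mx_of; apply: (iffP orP) => -[] /eqP; auto. Qed.

Lemma unitmx_mx_of x : unimodularb x -> mx_of x \in unitmx.
Proof. by rewrite unitmxE det_mx_of => /orP[] /eqP ->; rewrite ?unitr1 ?unitrN1. Qed.

Lemma invmx_mx_of x : unimodularb x -> invmx (mx_of x) = det3 x *: mx_of (adj3 x).
Proof.
move=> u; have det_sq : det3 x * det3 x = 1 by case/orP: u => /eqP ->; rewrite ?mulrNN mulr1.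
have inv_r : mx_of x *m (det3 x *: mx_of (adj3 x)) = 1%:M.
  by rewrite -scalemxAr mul_mx_of_adj3 scale_scalar_mx det_sq.
by rewrite -[invmx _]mulmx1 -inv_r mulmxA mulVmx ?mul1mx // unitmx_mx_of.
Qed.

Definition nz_bounded (k : nat) (v : int) : bool := (v != 0) && (`|v| <= k)%N.

Lemma nz_bounded_signM k e v :
  (e == 1) || (e == -1) -> nz_bounded k (e * v) = nz_bounded k v.
Proof. by case/orP=> /eqP ->; rewrite /nz_bounded ?mul1r // mulN1r oppr_eq0 abszN. Qed.

Lemma nz_bounded_le k l v : (k <= l)%N -> nz_bounded k v -> nz_bounded l v.
Proof. by move=> le_kl /andP[nz le_vk]; rewrite /nz_bounded nz (leq_trans le_vk). Qed.

(* The entries of M^-1 = (det M) adj M are checked on adj M. *)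
Definition admissible (k : nat) (x : mat3) : bool :=
  [&& unimodularb x, all (nz_bounded k) (entries x) & all (nz_bounded k) (entries (adj3 x))].

Lemma admissibleP k x : reflect
  (unimodular (mx_of x) /\ zerofree (mx_of x) /\ (pairnorm (mx_of x) <= k)%N)
  (admissible k x).
Proof.
apply: (iffP and3P).
  case=> u /all_entriesP bM /all_entriesP badj; split; first exact/unimodularbP.
  have binv i j : nz_bounded k (invmx (mx_of x) i j).
    by rewrite invmx_mx_of // mxE nz_bounded_signM.
  split; first split; [exact: unitmx_mx_of | split |].
  - by move=> i j; case/andP: (bM i j).
  - by move=> i j; case/andP: (binv i j).
  - by apply/pairnorm_leP; split=> i j; [case/andP: (bM i j) | case/andP: (binv i j)].
case=> /unimodularbP u [[_ [nzM nzinv]] /pairnorm_leP [bM binv]]; split => //.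
  by apply/all_entriesP => i j; rewrite /nz_bounded nzM bM.
apply/all_entriesP => i j; rewrite -(nz_bounded_signM _ _ u).
by move: (nzinv i j) (binv i j); rewrite invmx_mx_of // mxE /nz_bounded => -> ->.
Qed.

Lemma admissibleW k l x : (k <= l)%N -> admissible k x -> admissible l x.
Proof.
move=> le_kl /and3P[u bM badj]; have le_kl_at v := @nz_bounded_le k l v le_kl.
by rewrite /admissible u (sub_all le_kl_at bM) (sub_all le_kl_at badj).
Qed.

Definition small_nonzero : seq int := [:: -3; -2; -1; 1; 2; 3].

Definition small_vecs : seq vec3 :=
  [seq (ab, c) | ab <- [seq (a, b) | a <- small_nonzero, b <- small_nonzero],
                 c <- small_nonzero].

Definition small_vec (v : vec3) : bool :=
  let '(a, b, c) := v in all (nz_bounded 3) [:: a; b; c].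

(* cross u v is the last column of the adjugate of a matrix with first rows u, v:
   pruning on it keeps the enumeration small. *)
Definition first_rows : seq (vec3 * vec3) :=
  [seq (u, v) | u <- small_vecs, v <- [seq v <- small_vecs | small_vec (cross u v)]].

Definition search3 : seq mat3 :=
  [seq x <- [seq (uv, w) | uv <- first_rows, w <- small_vecs] | admissible 3 x].

Lemma nz_bounded3_small v : nz_bounded 3 v -> v \in small_nonzero.
Proof. by case: v => [[|[|[|[|n]]]]|[|[|[|n]]]]. Qed.

Lemma mem_search3 x : (x \in search3) = admissible 3 x.
Proof.
rewrite mem_filter andb_idr //.
case: x => [[[[a b] c] [[d e] f]] [[g h] i]] /and3P[_ /allP bM /allP badj].
have small_row u v w : u \in [:: a; b; c; d; e; f; g; h; i] ->
    v \in [:: a; b; c; d; e; f; g; h; i] -> w \in [:: a; b; c; d; e; f; g; h; i] ->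
    (u, v, w) \in small_vecs.
  by move=> /bM/nz_bounded3_small su /bM/nz_bounded3_small sv /bM/nz_bounded3_small sw;
    apply: allpairs_f => //; exact: allpairs_f.
have small_cross : small_vec (cross (a, b, c) (d, e, f)).
  by apply/allP => v; rewrite !inE => /or3P[] /eqP ->; apply: badj; rewrite !inE eqxx ?orbT.
apply: allpairs_f; last by apply: small_row; rewrite !inE eqxx ?orbT.
apply/allpairsPdep; exists (a, b, c), (d, e, f); split => //.
  by apply: small_row; rewrite !inE eqxx ?orbT.
by rewrite mem_filter small_cross small_row // !inE eqxx ?orbT.
Qed.

Definition neg3 (v : vec3) : vec3 := let '(a, b, c) := v in (- a, - b, - c).

Inductive rowop := Swap01 | Swap12 | Neg0 | Neg1 | Neg2.

Definition apply_rowop (o : rowop) (x : mat3) : mat3 :=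
  let '(u, v, w) := x in
  match o with
  | Swap01 => (v, u, w) | Swap12 => (u, w, v)
  | Neg0 => (neg3 u, v, w) | Neg1 => (u, neg3 v, w) | Neg2 => (u, v, neg3 w)
  end.

Definition rowop_perm (o : rowop) : 'S_3 :=
  match o with
  | Swap01 => tperm (@Ordinal 3 0 isT) (@Ordinal 3 1 isT)
  | Swap12 => tperm (@Ordinal 3 1 isT) (@Ordinal 3 2 isT)
  | _ => 1%g
  end.

Definition rowop_sign (o : rowop) (i : 'I_3) : int :=
  match o with
  | Neg0 => if i == 0%N :> nat then -1 else 1
  | Neg1 => if i == 1%N :> nat then -1 else 1
  | Neg2 => if i == 2%N :> nat then -1 else 1
  | _ => 1
  end.

Lemma mx_of_rowop o x :
  mx_of (apply_rowop o x) = signed_perm (rowop_perm o) (rowop_sign o) *m mx_of x.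
Proof.
case: x => [[[[a b] c] [[d e] f]] [[g h] i]]; apply/matrixP => p q.
rewrite mul_signed_permE !mxE.
case: o; rewrite /= ?perm1 ?permE /=;
by case: p => [[|[|[|//]]] ?]; case: q => [[|[|[|//]]] ?]; rewrite /= ?mul1r ?mulN1r.
Qed.

Lemma signed_perm_mx_rowop o :
  signed_perm_mx (signed_perm (rowop_perm o) (rowop_sign o)).
Proof.
exists (rowop_perm o), (rowop_sign o); split => // i.
by case: o => /=; try case: ifP; auto.
Qed.

Lemma apply_rowopK o : involutive (apply_rowop o).
Proof. by case=> [[[[a b] c] [[d e] f]] [[g h] i]]; case: o => /=; rewrite ?opprK. Qed.

Inductive elemop := RowOp of rowop | ColOp of rowop.

Definition apply_op (o : elemop) (x : mat3) : mat3 :=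
  match o with
  | RowOp r => apply_rowop r x
  | ColOp r => tr3 (apply_rowop r (tr3 x))
  end.

Lemma apply_opK o : involutive (apply_op o).
Proof. by case: o => r x /=; rewrite ?tr3K apply_rowopK ?tr3K. Qed.

Lemma mx_equiv_apply_op Z o x :
  mx_equiv Z (mx_of x) -> mx_equiv Z (mx_of (apply_op o x)).
Proof.
move=> eqZx; case: o => r /=.
  rewrite mx_of_rowop -[_ *m _]mulmx1.
  exact: mx_equiv_mul eqZx (signed_perm_mx_rowop r) (signed_perm_mx1 3).
rewrite mx_of_tr3 mx_of_rowop trmx_mul mx_of_tr3 trmxK -[mx_of x]mul1mx.
exact: mx_equiv_mul eqZx (signed_perm_mx1 3) (signed_perm_mx_tr (signed_perm_mx_rowop r)).
Qed.

Definition reduce (steps : seq ((mat3 -> bool) * elemop)) (x : mat3) : mat3 :=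
  foldl (fun y step => if step.1 y then apply_op step.2 y else y) x steps.

Lemma mx_equiv_reduce Z steps x :
  mx_equiv Z (mx_of (reduce steps x)) -> mx_equiv Z (mx_of x).
Proof.
elim: steps x => [//|[test o] steps IH] x /= /IH.
by case: ifP => // _ /(mx_equiv_apply_op o); rewrite apply_opK.
Qed.

(* On a matrix of search3 these steps move its unique entry of absolute value 3
   to position (2, 2), make the last row and column positive, and then bring an
   entry of absolute value 1 to position (0, 0). *)
Definition normal_form_steps : seq ((mat3 -> bool) * elemop) :=
  let abs3 (v : int) := `|v|%N == 3%N in
  let e := mat_entry in
  [:: (fun y => [|| abs3 (e y 0 0), abs3 (e y 0 1) | abs3 (e y 0 2)], RowOp Swap01);
      (fun y => [|| abs3 (e y 1 0), abs3 (e y 1 1) | abs3 (e y 1 2)], RowOp Swap12);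
      (fun y => [|| abs3 (e y 0 0), abs3 (e y 1 0) | abs3 (e y 2 0)], ColOp Swap01);
      (fun y => [|| abs3 (e y 0 1), abs3 (e y 1 1) | abs3 (e y 2 1)], ColOp Swap12);
      (fun y => e y 2 2 < 0, RowOp Neg2);
      (fun y => e y 0 2 < 0, RowOp Neg0);
      (fun y => e y 1 2 < 0, RowOp Neg1);
      (fun y => e y 2 0 < 0, ColOp Neg0);
      (fun y => e y 2 1 < 0, ColOp Neg1);
      (fun y => `|e y 0 0|%N != 1%N, RowOp Swap01);
      (fun y => `|e y 0 0|%N != 1%N, ColOp Swap01)].

Definition normal_form : mat3 -> mat3 := reduce normal_form_steps.

Definition m0 : mat3 := ((1, 2, 2), (2, 1, 2), (2, 2, 3)).

Lemma M0E : M0 = mx_of m0.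
Proof.
by apply/matrixP => p q; rewrite !mxE; case: p => [[|[|[|//]]] ?]; case: q => [[|[|[|//]]] ?].
Qed.

Lemma admissible_m0 : admissible 3 m0.
Proof. by vm_compute. Qed.

Lemma search3_spec :
  [&& all (fun x => ~~ admissible 2 x) search3, all (fun x => normal_form x == m0) search3,
      uniq search3 & size search3 == 576%N].
Proof. vm_compute; reflexivity. Qed.

Lemma search3_not_admissible2 : {in search3, forall x, ~~ admissible 2 x}.
Proof. apply/allP; case/and4P: search3_spec => not_adm2 _ _ _; exact: not_adm2. Qed.

Lemma normal_form_search3 : {in search3, forall x, normal_form x = m0}.
Proof. move=> x; case/and4P: search3_spec => _ /allP to_m0 _ _ /to_m0/eqP nf; exact: nf. Qed.

Lemma uniq_search3 : uniq search3.
Proof. case/and4P: search3_spec => _ _ uniq3 _; exact: uniq3. Qed.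

Lemma size_search3 : size search3 = 576%N.
Proof. case/and4P: search3_spec => _ _ _ /eqP size3; exact: size3. Qed.

Lemma three_le_pairnorm (M : 'M[int]_3) :
  unimodular M -> zerofree M -> (3 <= pairnorm M)%N.
Proof.
move=> u z; rewrite leqNgt; apply/negP => lt3.
have adm2 : admissible 2 (mat_of M) by apply/admissibleP; rewrite mat_ofK.
have adm3 : mat_of M \in search3 by rewrite mem_search3 (@admissibleW 2).
exact: negP (search3_not_admissible2 adm3) adm2.
Qed.

Lemma minimizerP (M : 'M[int]_3) :
  unimodular M /\ zerofree M /\ pairnorm M = 3%N <-> mat_of M \in search3.
Proof.
rewrite mem_search3; split.
  by case=> u [z norm3]; apply/admissibleP; rewrite mat_ofK norm3.
move=> /admissibleP; rewrite mat_ofK => -[u [z le3]]; do 2!split => //.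
by apply/eqP; rewrite eqn_leq le3 three_le_pairnorm.
Qed.

Lemma minimizer_equiv (M : 'M[int]_3) :
  unimodular M -> zerofree M -> pairnorm M = 3%N -> mx_equiv M0 M.
Proof.
move=> u z norm3; have /minimizerP/normal_form_search3 := conj u (conj z norm3).
rewrite -{2}[M]mat_ofK /normal_form => m0_nf.
apply: (mx_equiv_reduce (steps := normal_form_steps)).
by rewrite m0_nf -M0E; apply: mx_equiv_refl.
Qed.

Theorem mainTheorem8 :
  (forall M : 'M[int]_3, unimodular M -> zerofree M -> (3 <= pairnorm M)%N) /\
  (unimodular M0 /\ zerofree M0 /\ pairnorm M0 = 3%N) /\
  (exists s : seq 'M[int]_3,
      uniq s /\ size s = 576%N /\
      (forall M : 'M[int]_3,
          M \in s <-> (unimodular M /\ zerofree M /\ pairnorm M = 3%N))) /\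
  (forall M : 'M[int]_3,
      unimodular M -> zerofree M -> pairnorm M = 3%N -> mx_equiv M0 M).
Proof.
have mx_of_inj := can_inj mx_ofK.
split; first exact: three_le_pairnorm.
split; first by apply/minimizerP; rewrite M0E mx_ofK mem_search3 admissible_m0.
split; last exact: minimizer_equiv.
exists (map mx_of search3); split; first by rewrite (map_inj_uniq mx_of_inj) uniq_search3.
split; first by rewrite size_map size_search3.
by move=> M; rewrite minimizerP -(mem_map mx_of_inj _ (mat_of M)) mat_ofK.
Qed.
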